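(* Let $U:SO(3)\times\mathbb{R}\to\mathbb{R}_{\ge0}$ be a potential function with respect to $\mathcal{A}_o=(I_3,0)$ and let $\Theta\subset\mathbb{R}$ be a nonempty finite set. Suppose that: - $\mathcal{A}_o\in\Psi_U$ and there is $\delta>0$ with $\mu_U(R,\theta)>\delta$ for all $(R,\theta)\in\Psi_U\setminus\{\mathcal{A}_o\}$; - there is $c_\psi>0$ with $\|\psi(R^\top\nabla_RU(R,\theta))\|\le c_\psi$ for all $(R,\theta)\in SO(3)\times\mathbb{R}$. Let $0<\delta'<\delta$ and $0<\varrho<(\delta-\delta')/c_\psi^2$. Then $\mu_W(R,\theta,\zeta)>\delta'$ for all $(R,\theta,\zeta)\in\Psi_W\setminus\{\widehat{\mathcal{A}}_o\}$.
   Context: Notation. - $\psi(A)=\tfrac12[a_{32}-a_{23},a_{13}-a_{31},a_{21}-a_{12}]^\top$ for $A=[a_{ij}]\in\mathbb{R}^{3\times3}$. - $\nabla_RU(R,\theta)\in T_RSO(3)=\{R\Omega:\Omega^\top=-\Omega\}$ is the gradient in $R$ with respect to the metric $\langle R\Omega_1,R\Omega_2\rangle_R=\mathrm{tr}(\Omega_1^\top\Omega_2)$, and $\nabla_\theta U$ is the partial derivative in $\theta$. - A potential function with respect to $(I_3,0)$ is continuously differentiable, nonnegative, and vanishes exactly at $(I_3,0)$. - $\Psi_U=\{(R,\theta):\nabla_RU=0,\nabla_\theta U=0\}$ and $\mu_U(R,\theta)=U(R,\theta)-\min_{\theta'\in\Theta}U(R,\theta')$. - $W(R,\theta,\zeta)=U(R,\theta)+\varrho\|\zeta-\psi(R^\top\nabla_RU(R,\theta))\|^2$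 on $SO(3)\times\mathbb{R}\times\mathbb{R}^3$, and $\mu_W(R,\theta,\zeta)=W(R,\theta,\zeta)-\min_{\theta'\in\Theta}W(R,\theta',\zeta)$. - $\widehat{\mathcal{A}}_o=(I_3,0,0)$ and $\Psi_W=\{(R,\theta,\zeta):(R,\theta)\in\Psi_U,\ \zeta=0\}$. *)

From HB Require Import structures.
From mathcomp Require Import all_boot all_order all_algebra.
From mathcomp Require Import all_classical all_reals all_analysis.
Set Implicit Arguments. Unset Strict Implicit. Unset Printing Implicit Defensive.
Import Order.TTheory GRing.Theory Num.Theory.
Import numFieldNormedType.Exports.
Local Open Scope ring_scope.
Local Open Scope classical_set_scope.

Section Defs.
Variable R : realType.

Definition SO3 (Q : 'M[R]_3) : Prop := Q^T *m Q = 1%:M /\ \det Q = 1.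

Definition skew (A : 'M[R]_3) : Prop := A^T = - A.

(* psi(A) = 1/2 [a32 - a23, a13 - a31, a21 - a12]^T  (0-based indices) *)
Definition psi (A : 'M[R]_3) : 'cV[R]_3 :=
  \col_(i < 3)
    (2^-1 * (if i == 0%N :> nat then A 2%:R 1%:R - A 1%:R 2%:R
             else if i == 1%N :> nat then A 0 2%:R - A 2%:R 0
             else A 1%:R 0 - A 0 1%:R)).

Definition enorm (v : 'cV[R]_3) : R := Num.sqrt (\sum_(i < 3) v i 0 ^+ 2).

(* GR, Gth are the gradient in R (w.r.t. <R O1, R O2> = tr(O1^T O2)) and
   the partial derivative in theta of U, and they are continuous on
   SO(3) x R (so U is continuously differentiable).  Differentiability is
   expressed along all differentiable curves (g,h) in SO(3) x R:
   d/dt U(g t, h t)|_{t=0} = <GR, g'(0)>_{g 0} + Gth * h'(0). *)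
Definition is_C1_with_gradient (U : 'M[R]_3 -> R -> R)
    (GR : 'M[R]_3 -> R -> 'M[R]_3) (Gth : 'M[R]_3 -> R -> R) : Prop :=
  (forall Q th, SO3 Q -> skew (Q^T *m GR Q th)) /\
  (forall Q th (g : R -> 'M[R]_3) (h : R -> R) (Om : 'M[R]_3) (v : R),
      SO3 Q -> (forall t, SO3 (g t)) -> g 0 = Q -> h 0 = th -> skew Om ->
      is_derive (0 : R) 1 g (Q *m Om) -> is_derive (0 : R) 1 h v ->
      is_derive (0 : R) 1 (fun t => U (g t) (h t))
        (\tr ((Q^T *m GR Q th)^T *m Om) + Gth Q th * v)) /\
  {within [set p : 'M[R]_3 * R | SO3 p.1], continuous (fun p => GR p.1 p.2)} /\
  {within [set p : 'M[R]_3 * R | SO3 p.1], continuous (fun p => Gth p.1 p.2)}.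

Definition potential_function (U : 'M[R]_3 -> R -> R)
    (GR : 'M[R]_3 -> R -> 'M[R]_3) (Gth : 'M[R]_3 -> R -> R) : Prop :=
  is_C1_with_gradient U GR Gth /\
  (forall Q th, SO3 Q -> 0 <= U Q th) /\
  (forall Q th, SO3 Q -> (U Q th = 0 <-> Q = 1%:M /\ th = 0)).

(* minimum of f over the (nonempty) finite set given by the list s *)
Definition seqmin (s : seq R) (f : R -> R) : R :=
  \big[Num.min/f (head 0 s)]_(t <- s) f t.

Definition PsiU (GR : 'M[R]_3 -> R -> 'M[R]_3) (Gth : 'M[R]_3 -> R -> R)
    (Q : 'M[R]_3) (th : R) : Prop :=
  SO3 Q /\ GR Q th = 0 /\ Gth Q th = 0.

Definition muU (Theta : seq R) (U : 'M[R]_3 -> R -> R) Q th : R :=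
  U Q th - seqmin Theta (U Q).

Definition W (rho : R) (U : 'M[R]_3 -> R -> R) (GR : 'M[R]_3 -> R -> 'M[R]_3)
    (Q : 'M[R]_3) (th : R) (z : 'cV[R]_3) : R :=
  U Q th + rho * enorm (z - psi (Q^T *m GR Q th)) ^+ 2.

Definition muW (Theta : seq R) rho U GR Q th z : R :=
  W rho U GR Q th z - seqmin Theta (fun th' => W rho U GR Q th' z).

Definition PsiW GR Gth (Q : 'M[R]_3) (th : R) (z : 'cV[R]_3) : Prop :=
  PsiU GR Gth Q th /\ z = 0.

End Defs.

(* At a critical point of W we have zeta = 0 and nabla_R U = 0, so W coincides
   with U there, while on the slice zeta = 0 the penalty term of W is at most
   rho c_psi^2.  Hence mu_W >= mu_U - rho c_psi^2 > delta - (delta - delta'). *)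

From HB Require Import structures.
From mathcomp Require Import all_boot all_order all_algebra.
From mathcomp Require Import all_classical all_reals all_analysis.
Set Implicit Arguments. Unset Strict Implicit. Unset Printing Implicit Defensive.
Import Order.TTheory GRing.Theory Num.Theory.
Local Open Scope ring_scope.

Section SeqMin.
Variable R : realType.
Implicit Types (s : seq R) (f g : R -> R).

Lemma seqmin_le s f t : t \in s -> seqmin s f <= f t.
Proof. by move=> ts; exact: ge_bigmin_seq. Qed.

Lemma seqmin_attained s f : s != [::] -> exists2 t, t \in s & seqmin s f = f t.
Proof.
move=> s_nz; rewrite /seqmin big_seq.
apply: (big_ind (fun v => exists2 t, t \in s & v = f t)).
- by exists (head 0 s) => //; case: s s_nz => //= a s _; rewrite mem_head.
- by move=> _ _ [a ? ->] [b ? ->]; rewrite minEle; case: ifP; [exists a | exists b].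
- by move=> t ts; exists t.
Qed.

Lemma seqmin_leD s f g c : s != [::] -> {in s, forall t, g t <= f t + c} ->
  seqmin s g <= seqmin s f + c.
Proof.
move=> s_nz g_le; have [t ts ->] := seqmin_attained f s_nz.
exact: le_trans (seqmin_le g ts) (g_le t ts).
Qed.

End SeqMin.

Section CriticalPoints.
Variable R : realType.

Lemma psi0 : psi (0 : 'M[R]_3) = 0.
Proof. by apply/matrixP => i j; rewrite !mxE !subr0 !if_same mulr0. Qed.

Lemma enorm0 : enorm (0 : 'cV[R]_3) = 0.
Proof. by rewrite /enorm big1 ?sqrtr0 // => i _; rewrite mxE expr0n. Qed.

Lemma enormN (v : 'cV[R]_3) : enorm (- v) = enorm v.
Proof. by congr Num.sqrt; apply: eq_bigr => i _; rewrite mxE sqrrN. Qed.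

Lemma enorm_ge0 (v : 'cV[R]_3) : 0 <= enorm v.
Proof. exact: sqrtr_ge0. Qed.

Variables (U : 'M[R]_3 -> R -> R) (GR : 'M[R]_3 -> R -> 'M[R]_3).
Variables (rho c : R) (Q : 'M[R]_3).
Hypothesis rho_ge0 : 0 <= rho.
Hypothesis psi_bound : forall th, enorm (psi (Q^T *m GR Q th)) <= c.

Lemma W_zeta0 th :
  W rho U GR Q th 0 = U Q th + rho * enorm (psi (Q^T *m GR Q th)) ^+ 2.
Proof. by rewrite /W sub0r enormN. Qed.

Lemma W_crit th : GR Q th = 0 -> W rho U GR Q th 0 = U Q th.
Proof. by move=> GR0; rewrite W_zeta0 GR0 mulmx0 psi0 enorm0 expr0n mulr0 addr0. Qed.

Lemma muU_sub_le_muW (Theta : seq R) th : Theta != [::] -> GR Q th = 0 ->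
  muU Theta U Q th - rho * c ^+ 2 <= muW Theta rho U GR Q th 0.
Proof.
move=> Theta_nz GR0; rewrite /muW /muU W_crit // -addrA -opprD lerD2l lerN2.
have c_ge0 : 0 <= c := le_trans (enorm_ge0 _) (psi_bound th).
apply: seqmin_leD => // t _; rewrite W_zeta0 lerD2l ler_wpM2l //.
by rewrite lerXn2r ?nnegrE ?enorm_ge0.
Qed.

End CriticalPoints.

Theorem lemma1 (R : realType) (U : 'M[R]_3 -> R -> R)
    (GR : 'M[R]_3 -> R -> 'M[R]_3) (Gth : 'M[R]_3 -> R -> R)
    (Theta : seq R) (delta c_psi delta' rho : R) :
  potential_function U GR Gth ->
  Theta != [::] ->
  PsiU GR Gth 1%:M 0 ->
  0 < delta ->
  (forall Q th, PsiU GR Gth Q th -> (Q, th) != (1%:M, 0) ->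
     delta < muU Theta U Q th) ->
  0 < c_psi ->
  (forall Q th, SO3 Q -> enorm (psi (Q^T *m GR Q th)) <= c_psi) ->
  0 < delta' -> delta' < delta ->
  0 < rho -> rho < (delta - delta') / c_psi ^+ 2 ->
  forall Q th z, PsiW GR Gth Q th z -> (Q, th, z) != (1%:M, 0, 0) ->
    delta' < muW Theta rho U GR Q th z.
Proof.
move=> _ Theta_nz _ _ muU_gap c_gt0 psi_bound _ _ rho_gt0 rho_lt Q th z.
move=> [[SQ [GR0 Gth0]] ->] crit_ne.
have QE_ne : (Q, th) != (1%:M, 0) by apply: contra crit_ne => /eqP [-> ->].
have gapU := muU_gap Q th (conj SQ (conj GR0 Gth0)) QE_ne.
have penalty_lt : rho * c_psi ^+ 2 < delta - delta'.
  by rewrite -ltr_pdivlMr ?exprn_gt0.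
apply: lt_le_trans (muU_sub_le_muW U (ltW rho_gt0) (psi_bound Q ^~ SQ) Theta_nz GR0).
by rewrite ltrBrDr (lt_trans _ gapU) // -ltrBrDl.
Qed.
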